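(* Fix $n\ge1$, $p\in(0,1]$. Let $ALG$ be any $\gamma$-robust policy for the SP-UA. Then for every $U:[n]\to\mathbb R_+$ with $U_1\ge U_2\ge\cdots\ge U_n\ge0$, $\mathbb E[U(ALG)]\ge\gamma\,\mathbb E[U(OPT)]$. Moreover, \[ \gamma_n^*=\max_{ALG}\ \min\Big\{\frac{\mathbb E[U(ALG)]}{\mathbb E[U(OPT)]}:\ U:[n]\to\mathbb R_+,\ U\neq0,\ U_1\ge\cdots\ge U_n\ge0\Big\}, \] where the maximum is over policies for the SP-UA.
   Context: SP-UA model: fix $n\ge1$, $p\in(0,1]$; $n$ candidates with distinct overall ranks $1,\dots,n$ ($1$ best) arrive in uniformly random order; the decision maker sees only partial ranks (the rank of the current candidate among those arrived so far) and irrevocably decides (possibly randomly) to make an offer or pass; each candidate is independently willing to accept an offer with probability $p$, and the process stops when an offer is accepted. A policy collects a candidate of rank $i$ if it makes her an offer and she accepts. Robust ratio $\gamma_{\mathcal P}=\min_{k\in[n]}\Pr(\mathcal P\text{ collects a candidate with rank}\le k)/(1-(1-p)^k)$; $\gamma_n^*=\sup_{\mathcal P}\gamma_{\mathcal P}$; $\mathcal P$ is $\gamma$-robust if $\gamma\le\gamma_{\mathcal P}$. Given a utility $U$, $U(ALG)$ is $U_i$ if $ALG$ collects a candidate of overall rank $i$ and $0$ if it collects no one; $U(OPT)=U_{i^*}$ where $i^*$ is the best overall rank among candidates willing to accept (and $0$ if none is willing), so $\mathbb E[U(OPT)]=\sum_{i=1}^nU_ip(1-p)^{i-1}$. *)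

From HB Require Import structures.
From mathcomp Require Import all_boot all_order all_algebra all_fingroup.
From mathcomp Require Import all_classical all_reals.
Set Implicit Arguments. Unset Strict Implicit. Unset Printing Implicit Defensive.
Import Order.TTheory GRing.Theory Num.Theory.
Local Open Scope classical_set_scope.
Local Open Scope ring_scope.

Section SPUA.
Variable R : realType.

(* A (behavioral, possibly randomized) policy: given the partial ranks
   r_1..r_t observed so far (r_t = partial rank of the current candidate)
   and its own past decisions d_1..d_{t-1} (true = offer made; every past
   offer was necessarily rejected, otherwise the process has stopped),
   it makes an offer with probability  q r d. *)
Definition policy := seq nat -> seq bool -> R.
Definition is_policy (q : policy) := forall r d, 0 <= q r d <= 1.

(* Arrival order: sigma t (0-based) is the overall rank minus 1 of the
   candidate arriving at time t (0-based). *)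
Definition ranks_seq n (s : {perm 'I_n}) : seq nat := [seq val (s i) | i <- enum 'I_n].

(* partial rank (1-based) of the candidate arriving at time u *)
Definition prank (rs : seq nat) (u : nat) : nat :=
  count (fun x => (x <= nth 0%N rs u)%N) (take u.+1 rs).
Definition pranks (rs : seq nat) (t : nat) : seq nat := [seq prank rs u | u <- iota 0 t.+1].

(* probability that the process reaches time size d with decision history d
   (all offers rejected) *)
Definition reach (q : policy) (p : R) (rs : seq nat) (d : seq bool) : R :=
  \prod_(u < size d)
    (let x := q (pranks rs u) (take u d) in
     if nth false d u then x * (1 - p) else 1 - x).

Definition collect_at (q : policy) (p : R) (rs : seq nat) (t : nat) : R :=
  \sum_(d : t.-tuple bool) reach q p rs d * q (pranks rs t) d * p.

(* E[U(ALG)], U i = utility of overall rank i (1-based) *)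
Definition expU n (p : R) (q : policy) (U : nat -> R) : R :=
  (n`!%:R)^-1 * \sum_(s : {perm 'I_n}) \sum_(t < n)
     U (val (s t)).+1 * collect_at q p (ranks_seq s) t.

Definition Pcollect_le n (p : R) (q : policy) (k : nat) : R :=
  expU n p q (fun i => if (i <= k)%N then 1 else 0).

Definition expOPT n (p : R) (U : nat -> R) : R :=
  \sum_(1 <= i < n.+1) U i * p * (1 - p) ^+ (i - 1).

Definition robust_ratio n (p : R) (q : policy) : R :=
  inf [set Pcollect_le n p q k / (1 - (1 - p) ^+ k) | k in [set k : nat | (1 <= k <= n)%N]].

Definition is_robust n (p : R) (g : R) (q : policy) := g <= robust_ratio n p q.

Definition gamma_star n (p : R) : R :=
  sup [set robust_ratio n p q | q in [set q | is_policy q]].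

(* U : [n] -> R_+ with U_1 >= ... >= U_n >= 0 (values outside [n] irrelevant) *)
Definition admissible_utility n (U : nat -> R) :=
  (forall i, (1 <= i <= n)%N -> 0 <= U i) /\
  (forall i, (1 <= i < n)%N -> U i.+1 <= U i) /\ 0 <= U n.

Definition nonzero_utility n (U : nat -> R) := exists i, (1 <= i <= n)%N /\ U i <> 0.

Definition worst_ratio n (p : R) (q : policy) : R :=
  inf [set expU n p q U / expOPT n p U |
        U in [set U | admissible_utility n U /\ nonzero_utility n U]].

End SPUA.

From HB Require Import structures.
From mathcomp Require Import all_boot all_order all_algebra all_fingroup.
From mathcomp Require Import all_classical all_reals all_analysis.
From mathcomp Require Import lra.
Set Implicit Arguments. Unset Strict Implicit. Unset Printing Implicit Defensive.
Import Order.TTheory GRing.Theory Num.Theory numFieldTopology.Exports.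
Local Open Scope ring_scope.

(* Every admissible utility is a nonnegative combination of the threshold
   utilities [1{i <= k}], k = 1..n (a layer-cake decomposition), and both
   E[U(ALG)] and E[U(OPT)] are linear in U.  For a threshold utility the two
   expectations are Pr(ALG collects rank <= k) and 1 - (1 - p)^k, so the
   ratio for U is a weighted average of the ratios in the definition of
   robustness: the worst utility ratio of a policy equals its robust ratio
   and is attained at a threshold utility.  A policy only matters through
   finitely many values in [0, 1], on which the robust ratio depends
   continuously; by compactness some policy attains gamma_n^*. *)

Section ExtremaOfSets.
Variable R : realType.

Lemma inf_attained (E : set R) e : E e -> lbound E e -> inf E = e.
Proof.
move=> Ee lb; apply/le_anti/andP; split.
  by apply: ge_inf => //; exists e.
by apply: lb_le_inf => //; exists e.
Qed.

Lemma sup_attained (E : set R) e : E e -> ubound E e -> sup E = e.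
Proof.
move=> Ee ub; apply/le_anti/andP; split.
  by apply: ge_sup => //; exists e.
by apply: ub_le_sup => //; exists e.
Qed.

(* [min_upto g 0 = g 1], a junk value; only [1 <= m] is ever used. *)
Fixpoint min_upto (g : nat -> R) (m : nat) : R :=
  if m is m'.+1 then Order.min (min_upto g m') (g m) else g 1%N.

Lemma min_upto_le g m k : (1 <= k <= m)%N -> min_upto g m <= g k.
Proof.
elim: m => [|m IH] /andP[k1 km]; first by case: k k1 km.
rewrite /= ge_min; move: km; rewrite leq_eqVlt => /orP[/eqP->|].
  by rewrite lexx orbT.
by rewrite ltnS => km; rewrite IH // k1.
Qed.

Lemma min_upto_attained g m : (1 <= m)%N ->
  exists2 k, (1 <= k <= m)%N & min_upto g m = g k.
Proof.
elim: m => // m IH _; have [m0|m_gt0] := posnP m.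
  by exists 1%N; rewrite m0 //= minxx.
have [k /andP[k1 km] gk] := IH m_gt0; rewrite /= gk.
case: leP => _; last by exists m.+1; rewrite ?leqnn.
by exists k; rewrite // k1 (leq_trans km).
Qed.

Lemma inf_range_min_upto g m : (1 <= m)%N ->
  inf [set g k | k in [set k : nat | (1 <= k <= m)%N]] = min_upto g m.
Proof.
move=> m1; have [k km gk] := min_upto_attained g m1.
apply: inf_attained; first by exists k.
by move=> _ [j jm <-]; apply: min_upto_le.
Qed.

End ExtremaOfSets.

Section ContinuityOfBigops.
Variables (R : realType) (T : topologicalType).

Lemma continuous_mul_fun (f g : T -> R) : continuous f -> continuous g ->
  continuous (fun x => f x * g x).
Proof. by move=> cf cg x; exact: continuousM (cf x) (cg x). Qed.

Lemma continuous_sumr (I : Type) (r : seq I) (P : pred I) (F : I -> T -> R) :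
  (forall i, continuous (F i)) -> continuous (fun x => \sum_(i <- r | P i) F i x).
Proof.
move=> cF; elim: r => [|i r IH].
  by under eq_fun => x do rewrite big_nil; exact: cst_continuous.
under eq_fun => x do rewrite big_cons.
by case: (P i) => // x; exact: continuousD (cF i x) (IH x).
Qed.

Lemma continuous_prodr (I : Type) (r : seq I) (P : pred I) (F : I -> T -> R) :
  (forall i, continuous (F i)) -> continuous (fun x => \prod_(i <- r | P i) F i x).
Proof.
move=> cF; elim: r => [|i r IH].
  by under eq_fun => x do rewrite big_nil; exact: cst_continuous.
under eq_fun => x do rewrite big_cons.
by case: (P i) => //; exact: continuous_mul_fun.
Qed.

Lemma continuous_min_upto (G : nat -> T -> R) m :
  (forall k, continuous (G k)) -> continuous (fun x => min_upto (G^~ x) m).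
Proof.
move=> cG; elim: m => [|m IH] //=.
by move=> x; exact: continuous_min (IH x) (cG m.+1 x).
Qed.

End ContinuityOfBigops.

Section LayerCake.
Variables (R : realType) (n : nat) (p : R).
Hypothesis p_range : 0 < p <= 1.

Definition threshold (k : nat) : nat -> R := fun i => if (i <= k)%N then 1 else 0.

(* Utilities are truncated to [0] beyond rank [n], so that [gap U n = U n]. *)
Definition truncated (U : nat -> R) (i : nat) : R := if (i <= n)%N then U i else 0.
Definition gap (U : nat -> R) (k : nat) : R := truncated U k - truncated U k.+1.

Lemma utility_layer_cake U i : (1 <= i <= n)%N ->
  U i = \sum_(1 <= k < n.+1) gap U k * threshold k i.
Proof.
case/andP=> i1 iN.
rewrite (@big_cat_nat _ _ _ i) //=; last exact: leqW.
rewrite big1_seq ?add0r; last first.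
  move=> k /andP[_]; rewrite mem_index_iota => /andP[_ ki].
  by rewrite /threshold leqNgt ki mulr0.
rewrite (@telescope_sumr_eq _ _ _ (fun k => - truncated U k)); last 2 first.
- exact: leqW.
- by move=> k /andP[ik _]; rewrite /threshold ik mulr1 /gap opprK addrC.
by rewrite /truncated ltnn iN opprK oppr0 add0r.
Qed.

Lemma expU_layer_cake q U :
  expU n p q U = \sum_(1 <= k < n.+1) gap U k * Pcollect_le n p q k.
Proof.
rewrite /Pcollect_le /expU.
under [RHS]eq_bigr => k _ do rewrite mulrCA.
rewrite -big_distrr /=; congr (_ * _).
under [in RHS]eq_bigr => k _ do rewrite big_distrr /=.
rewrite [RHS]exchange_big /=; apply: eq_bigr => s _.
under [in RHS]eq_bigr => k _ do rewrite big_distrr /=.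
rewrite [RHS]exchange_big /=; apply: eq_bigr => t _.
rewrite (@utility_layer_cake U (val (s t)).+1) ?ltn_ord //.
by rewrite big_distrl /=; apply: eq_bigr => k _; rewrite -mulrA.
Qed.

Lemma expOPT_layer_cake U :
  expOPT n p U = \sum_(1 <= k < n.+1) gap U k * expOPT n p (threshold k).
Proof.
rewrite /expOPT; under [in RHS]eq_bigr => k _ do rewrite big_distrr /=.
rewrite exchange_big /=; apply: eq_big_nat => i ii.
rewrite (utility_layer_cake U ii) !big_distrl /=; apply: eq_bigr => k _.
by rewrite !mulrA.
Qed.

Lemma sum_geometric_accept k :
  \sum_(1 <= i < k.+1) p * (1 - p) ^+ (i - 1) = 1 - (1 - p) ^+ k.
Proof.
elim: k => [|k IH]; first by rewrite big_geq // expr0 subrr.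
by rewrite big_nat_recr //= IH subSS subn0 exprS; lra.
Qed.

Lemma expOPT_threshold k : (k <= n)%N ->
  expOPT n p (threshold k) = 1 - (1 - p) ^+ k.
Proof.
move=> kn; rewrite /expOPT -sum_geometric_accept (@big_cat_nat _ _ _ k.+1) //=.
rewrite [X in _ + X]big1_seq ?addr0; last first.
  move=> i /andP[_]; rewrite mem_index_iota => /andP[ki _].
  by rewrite /threshold leqNgt ki !mul0r.
by apply: eq_big_nat => i /andP[_ ik]; rewrite /threshold -ltnS ik mul1r.
Qed.

Lemma accept_prob_gt0 k : (1 <= k)%N -> 0 < 1 - (1 - p) ^+ k.
Proof. by case/andP: p_range => p0 p1 k1; rewrite subr_gt0 expr_lt1 //; lra. Qed.

Lemma gap_ge0 U k : admissible_utility n U -> (1 <= k <= n)%N -> 0 <= gap U k.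
Proof.
case=> _ [Umono Un] /andP[k1 kn]; rewrite /gap /truncated kn.
have [kltn|] := ltnP k n; first by rewrite subr_ge0 Umono // k1.
move=> nk; have -> : k = n by apply/eqP; rewrite eqn_leq kn nk.
by rewrite subr0.
Qed.

Lemma admissible_utility_antimono (U : nat -> R) i j : admissible_utility n U ->
  (1 <= i)%N -> (i <= j <= n)%N -> U j <= U i.
Proof.
case=> _ [Umono _] i1; elim: j => [|j IH]; first by case: i i1.
case/andP; rewrite leq_eqVlt => /orP[/eqP->//|]; rewrite ltnS => ij jn.
apply: le_trans (IH _); first by apply: Umono; rewrite jn (leq_trans i1 ij).
by rewrite ij ltnW.
Qed.

Lemma expOPT_gt0 (U : nat -> R) : admissible_utility n U -> nonzero_utility n U ->
  0 < expOPT n p U.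
Proof.
move=> adm [i [/andP[i1 iN] Ui_neq0]]; have [p0 p1] := andP p_range.
have Uge0 j : (1 <= j <= n)%N -> 0 <= U j by case: adm => + _; apply.
have U1_gt0 : 0 < U 1%N.
  have Ui_gt0 : 0 < U i by rewrite lt_def Uge0 ?i1 ?iN // andbT; apply/eqP.
  by apply: lt_le_trans Ui_gt0 (admissible_utility_antimono adm _ _); rewrite ?i1.
rewrite /expOPT big_ltn ?ltnS ?(leq_trans i1 iN) //=.
apply: ltr_pwDl; first by rewrite subnn expr0 mulr1 mulr_gt0.
rewrite big_seq; apply: sumr_ge0 => j; rewrite mem_index_iota ltnS => /andP[j1 jn].
rewrite !mulr_ge0 ?exprn_ge0 ?Uge0 ?jn ?(ltnW j1) //; lra.
Qed.

Lemma threshold_admissible k : admissible_utility n (threshold k).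
Proof.
rewrite /threshold; split; first by move=> i _; case: ifP.
split; last by case: ifP.
by move=> i _; case: ifP => [/ltnW -> // | _]; case: ifP.
Qed.

Lemma threshold_nonzero k : (1 <= k <= n)%N -> nonzero_utility n (threshold k).
Proof.
case/andP=> k1 kn; exists 1%N; split; first by rewrite (leq_trans k1 kn).
by rewrite /threshold k1; apply/eqP; rewrite oner_eq0.
Qed.

Definition ratio_at (q : policy R) k := Pcollect_le n p q k / (1 - (1 - p) ^+ k).

Lemma robust_ratioE q : (1 <= n)%N -> robust_ratio n p q = min_upto (ratio_at q) n.
Proof. exact: inf_range_min_upto. Qed.

Lemma robust_ratio_le q k : (1 <= k <= n)%N -> robust_ratio n p q <= ratio_at q k.
Proof.
move=> kn; have [k1 /(leq_trans k1) n1] := andP kn.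
by rewrite robust_ratioE //; apply: min_upto_le.
Qed.

Lemma robust_expU_ge q g U : is_robust n p g q -> admissible_utility n U ->
  g * expOPT n p U <= expU n p q U.
Proof.
move=> rob adm; rewrite expOPT_layer_cake expU_layer_cake mulr_sumr.
apply: ler_sum_nat => k kn; have [k1 k_le_n] := andP kn.
rewrite expOPT_threshold // mulrCA; apply: ler_wpM2l; first exact: gap_ge0.
rewrite -ler_pdivlMr ?accept_prob_gt0 //.
exact: le_trans rob (robust_ratio_le q kn).
Qed.

Lemma worst_ratio_eq_robust_ratio q : (1 <= n)%N ->
  exists2 k, (1 <= k <= n)%N &
    worst_ratio n p q = robust_ratio n p q /\ robust_ratio n p q = ratio_at q k.
Proof.
move=> n1; have [k kn mink] := min_upto_attained (ratio_at q) n1.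
have robk : robust_ratio n p q = ratio_at q k by rewrite robust_ratioE.
exists k => //; split => //; rewrite robk.
apply: inf_attained.
  exists (threshold k); last by rewrite expOPT_threshold //; case/andP: kn.
  by split; [apply: threshold_admissible | apply: threshold_nonzero].
move=> _ [U [adm nz] <-]; rewrite -robk ler_pdivlMr ?expOPT_gt0 //.
exact: robust_expU_ge (lexx _) adm.
Qed.

End LayerCake.

Fixpoint seqs_upto (T : Type) (s : seq T) (m : nat) : seq (seq T) :=
  if m is m'.+1 then [::] :: [seq x :: t | x <- s, t <- seqs_upto s m']
  else [:: [::]].

Lemma mem_seqs_upto (T : eqType) (s : seq T) m t :
  (size t <= m)%N -> {subset t <= s} -> t \in seqs_upto s m.
Proof.
elim: m t => [|m IH] [|x t] //= tm ts; rewrite in_cons; apply/orP; right.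
apply: (allpairs_f (fun x t => x :: t)); first by apply: ts; rewrite mem_head.
by apply: IH => // y yt; apply: ts; rewrite in_cons yt orbT.
Qed.

Section OptimalPolicy.
Variables (R : realType) (n : nat) (p : R).

(* A policy is only ever queried on partial-rank sequences of length at most
   [n] with entries at most [n] and on decision histories of length at most [n]. *)
Definition policy_domain : seq (seq nat * seq bool) :=
  [seq (r, d) | r <- seqs_upto (iota 0 n.+1) n, d <- seqs_upto [:: true; false] n].

Lemma prank_le rs u : (prank rs u <= u.+1)%N.
Proof.
apply: leq_trans (count_size _ _) _; rewrite size_take.
by case: ifP => // /negbT; rewrite -leqNgt.
Qed.

Lemma pranks_in_domain rs u d : (u < n)%N -> (size d <= n)%N ->
  (pranks rs u, d) \in policy_domain.
Proof.
move=> un dn; apply: (allpairs_f (fun r d => (r, d))); last first.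
  by apply: mem_seqs_upto => // -[].
apply: mem_seqs_upto => [|x /mapP[v]]; first by rewrite size_map size_iota.
rewrite mem_iota add0n ltnS => /andP[_ vu] ->.
by rewrite mem_iota add0n ltnS (leq_trans (prank_le _ _)) // (leq_ltn_trans vu).
Qed.

Definition agree_on_domain (q1 q2 : policy R) :=
  forall r d, (r, d) \in policy_domain -> q1 r d = q2 r d.

Lemma collect_at_agree q1 q2 rs t : agree_on_domain q1 q2 -> (t < n)%N ->
  collect_at q1 p rs t = collect_at q2 p rs t.
Proof.
move=> ag tn; rewrite /collect_at; apply: eq_bigr => d _.
have dn : (size d <= n)%N by rewrite size_tuple ltnW.
rewrite ag ?pranks_in_domain //; congr (_ * _ * _); apply: eq_bigr => u _.
have ut : (u < t)%N by rewrite -{2}(size_tuple d).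
rewrite ag ?pranks_in_domain ?(ltn_trans ut tn) // size_take_min.
exact: leq_trans (geq_minr _ _) dn.
Qed.

Lemma expU_agree q1 q2 U : agree_on_domain q1 q2 -> expU n p q1 U = expU n p q2 U.
Proof.
move=> ag; congr (_ * _); apply: eq_bigr => s _; apply: eq_bigr => t _.
by rewrite (collect_at_agree _ ag).
Qed.

Local Notation N := (size policy_domain).

Definition policy_of_vec (x : 'rV[R]_N) : policy R := fun r d =>
  if (insub (index (r, d) policy_domain) : option 'I_N) is Some i then x ord0 i else 0.

Definition vec_of_policy (q : policy R) : 'rV[R]_N :=
  \row_(i < N) let: (r, d) := nth ([::], [::]) policy_domain i in q r d.

Lemma policy_of_vecK q : agree_on_domain (policy_of_vec (vec_of_policy q)) q.
Proof.
move=> r d rd; rewrite /policy_of_vec insubT ?index_mem // => i.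
by rewrite mxE /= nth_index.
Qed.

Lemma policy_of_vec_policy (x : 'rV[R]_N) :
  (forall i, 0 <= x ord0 i <= 1) -> is_policy (policy_of_vec x).
Proof. by move=> x01 r d; rewrite /policy_of_vec; case: insub; rewrite ?lexx ?ler01. Qed.

Lemma vec_of_policy_unit q : is_policy q -> forall i, 0 <= vec_of_policy q ord0 i <= 1.
Proof. by move=> qP i; rewrite mxE; case: nth. Qed.

Lemma continuous_policy_of_vec r d : continuous (fun x => policy_of_vec x r d).
Proof.
rewrite /policy_of_vec; case: insub => [i|]; last exact: cst_continuous.
exact: coord_continuous.
Qed.

Lemma continuous_expU U : continuous (fun x => expU n p (policy_of_vec x) U).
Proof.
apply: continuous_mul_fun; first exact: cst_continuous.
apply: continuous_sumr => s; apply: continuous_sumr => t.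
apply: continuous_mul_fun; first exact: cst_continuous.
apply: continuous_sumr => d; apply: continuous_mul_fun; last exact: cst_continuous.
apply: continuous_mul_fun; last exact: continuous_policy_of_vec.
apply: continuous_prodr => u; case: nth => /=.
  by apply: continuous_mul_fun; [exact: continuous_policy_of_vec | exact: cst_continuous].
move=> x; apply: continuousB; first exact: cst_continuous.
exact: continuous_policy_of_vec.
Qed.

Lemma exists_optimal_policy : (1 <= n)%N -> exists2 qs, is_policy qs &
  forall q, is_policy q -> robust_ratio n p q <= robust_ratio n p qs.
Proof.
move=> n1; pose F x := min_upto (ratio_at n p (policy_of_vec x)) n.
pose box := [set x : 'rV[R]_N | forall i, `[0, 1]%classic (x ord0 i)]%classic.
have cF : continuous F.
  apply: continuous_min_upto => k x.
  rewrite /ratio_at /Pcollect_le; apply: continuous_mul_fun.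
    exact: continuous_expU.
  exact: cst_continuous.
have [c /set_mem c01 Fmax] : exists2 c, c \in box & forall y, y \in box -> F y <= F c.
  apply: compact_EVT_max.
  - by exists 0 => i /=; rewrite mxE in_itv /= lexx ler01.
  - exact: (@rV_compact R N (fun=> `[0, 1]%classic) (fun=> @segment_compact R 0 1)).
  - exact: continuous_subspaceT.
have F_robust q : robust_ratio n p q = F (vec_of_policy q).
  rewrite robust_ratioE //; congr min_upto; apply: funext => k.
  by rewrite /ratio_at /Pcollect_le (expU_agree _ (policy_of_vecK q)).
exists (policy_of_vec c).
  by apply: policy_of_vec_policy => i; have := c01 i; rewrite /= in_itv.
move=> q qP; rewrite F_robust robust_ratioE //; apply: Fmax.
by rewrite inE => i /=; rewrite in_itv /= vec_of_policy_unit.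
Qed.

End OptimalPolicy.

Theorem proposition1 (R : realType) (n : nat) (p : R) :
  (1 <= n)%N -> 0 < p <= 1 ->
  (forall (q : policy R) (g : R), is_policy q -> is_robust n p g q ->
     forall U : nat -> R, admissible_utility n U ->
       g * expOPT n p U <= expU n p q U) /\
  ((exists q : policy R, is_policy q /\ worst_ratio n p q = gamma_star n p) /\
   (forall q : policy R, is_policy q -> worst_ratio n p q <= gamma_star n p) /\
   (forall q : policy R, is_policy q ->
      exists U : nat -> R, [/\ admissible_utility n U, nonzero_utility n U &
        expU n p q U / expOPT n p U = worst_ratio n p q])).
Proof.
move=> n1 p_range; split=> [q g _ rob U|]; first exact: robust_expU_ge.
have worst_robust q : worst_ratio n p q = robust_ratio n p q.
  by have [k _ []] := worst_ratio_eq_robust_ratio p_range q n1.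
have [qs qsP qs_best] := exists_optimal_policy p n1.
have gamma_qs : gamma_star n p = robust_ratio n p qs.
  by apply: sup_attained => [|_ [q qP <-]]; [exists qs | apply: qs_best].
split; first by exists qs; rewrite worst_robust gamma_qs.
split=> [q qP|q _]; first by rewrite worst_robust gamma_qs qs_best.
have [k kn [-> ->]] := worst_ratio_eq_robust_ratio p_range q n1.
exists (threshold R k); split; [exact: threshold_admissible | exact: threshold_nonzero |].
by rewrite /ratio_at expOPT_threshold //; case/andP: kn.
Qed.
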